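(* Let $g\ge 2$ and let $\Lambda_1,\dots,\Lambda_g$ be lattices in $\mathbb{C}$ such that $\Lambda_1+\cdots+\Lambda_g$ is not discrete. Then there is $2\le j\le g$ such that $\Lambda_1+\Lambda_j$ is not discrete. Moreover, if $\Lambda_1+\cdots+\Lambda_g$ is dense in $\mathbb{C}$, then for such a $j$ there is $2\le k\le g$ such that $\Lambda_1+\Lambda_j+\Lambda_k$ is dense in $\mathbb{C}$.
   Context: A lattice in $\mathbb{C}$ is a discrete subgroup $\mathbb{Z}a+\mathbb{Z}b$ with $a,b$ linearly independent over $\mathbb{R}$. *)

From Stdlib Require Import Reals List ZArith.
From Coquelicot Require Import Coquelicot.
Open Scope R_scope.
Open Scope C_scope.

Definition R_lin_indep (a b : C) : Prop :=
  forall r s : R, RtoC r * a + RtoC s * b = 0 -> r = 0%R /\ s = 0%R.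

Definition Zspan2 (a b : C) : C -> Prop :=
  fun z => exists m n : Z, z = RtoC (IZR m) * a + RtoC (IZR n) * b.

Fixpoint sumsets (l : list (C -> Prop)) : C -> Prop :=
  match l with
  | nil => fun z => z = 0
  | A :: l' => fun z => exists s t, A s /\ sumsets l' t /\ z = s + t
  end.

Definition discrete_set (S : C -> Prop) : Prop :=
  forall x, S x -> exists eps : R, (0 < eps)%R /\
    forall y, S y -> (Cmod (y - x) < eps)%R -> y = x.

Definition dense_set (S : C -> Prop) : Prop :=
  forall (z : C) (eps : R), (0 < eps)%R -> exists x, S x /\ (Cmod (x - z) < eps)%R.

(* If every Lambda_1 + Lambda_j were discrete, simultaneous Dirichlet approximation would
   give each element of Lambda_j a positive integer multiple in Lambda_1; with a common multiplier N
   the whole sum would lie in (1/N) Lambda_1 and be discrete.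
   For the second claim, the non-discrete group H = Lambda_1 + Lambda_j is either dense or
   has all its short vectors on one real line R u0.  In the latter case some
   Lambda_1 + Lambda_j + Lambda_k has vectors arbitrarily close to the line but off it:
   otherwise the coordinate Im (z / u0) of every lattice would be commensurable with that
   of a vector g0 of Lambda_1 off the line, and the sum of all lattices would lie on a
   discrete family of lines parallel to u0, contradicting density.  A group with short
   vectors on the line and vectors arbitrarily close to it is dense, since reducing the
   latter modulo the former yields short vectors in a second direction. *)

From Stdlib Require Import Reals List ZArith Lia Lra Classical.
From Coquelicot Require Import Coquelicot.
Open Scope R_scope.
Open Scope C_scope.

Lemma pigeonhole (n : nat) (f : nat -> nat) :
  (forall i, (i <= n)%nat -> (f i < n)%nat) ->
  exists i j, (i < j <= n)%nat /\ f i = f j.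
Proof.
  revert f; induction n as [|n IH]; intros f Hf.
  - specialize (Hf 0%nat (le_n 0)). lia.
  - destruct (classic (exists i, (i <= n)%nat /\ f i = f (S n))) as [(i & Hi & E) | NE].
    { exists i, (S n). split; [lia | exact E]. }
    (* redirect the value n to f (S n), which is free among the values of f on [0, n] *)
    set (f' i := if Nat.eqb (f i) n then f (S n) else f i).
    destruct (IH f') as (i & j & Hij & E).
    + intros i Hi. unfold f'. specialize (Hf (S n) (le_n _)) as HSn.
      destruct (Nat.eqb_spec (f i) n) as [Ei | Ei].
      * assert (f (S n) <> n) by (intros En; apply NE; exists i; split; congruence).
        lia.
      * specialize (Hf i ltac:(lia)). lia.
    + exists i, j. split; [lia |]. unfold f' in E.
      destruct (Nat.eqb_spec (f i) n), (Nat.eqb_spec (f j) n); try congruence;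
        exfalso; apply NE; [exists j | exists i]; split; (lia || congruence).
Qed.

Lemma dirichlet (t : R) (K : nat) : (1 <= K)%nat ->
  exists n : nat, (1 <= n <= K)%nat /\
    exists m : Z, (Rabs (INR n * t - IZR m) < / INR K)%R.
Proof.
  intros HK.
  assert (KP : (0 < INR K)%R) by (apply lt_0_INR; lia).
  set (fr i := frac_part (INR i * t)).
  set (box i := Int_part (INR K * fr i)).
  assert (Hbox : forall i, (IZR (box i) <= INR K * fr i < IZR (box i) + 1)%R
                         /\ (0 <= box i < Z.of_nat K)%Z).
  { intros i. pose proof (base_fp (INR i * t)) as Hfr. fold (fr i) in Hfr.
    pose proof (base_Int_part (INR K * fr i)) as Hb. fold (box i) in Hb.
    assert (HKfr : (0 <= INR K * fr i < INR K)%R) by nra.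
    split; [lra | split].
    - assert (Hm1 : (-1 < IZR (box i))%R) by lra.
      apply lt_IZR in Hm1. lia.
    - apply lt_IZR. rewrite <- INR_IZR_INZ. lra. }
  destruct (pigeonhole K (fun i => Z.to_nat (box i))) as (i & j & Hij & E).
  { intros i _. pose proof (proj2 (Hbox i)). lia. }
  assert (Ebox : box i = box j) by (pose proof (proj2 (Hbox i)); pose proof (proj2 (Hbox j)); lia).
  exists (j - i)%nat. split; [lia |].
  exists (Int_part (INR j * t) - Int_part (INR i * t))%Z.
  replace (INR (j - i) * t - IZR (Int_part (INR j * t) - Int_part (INR i * t)))%R
    with (fr j - fr i)%R
    by (unfold fr, frac_part; rewrite minus_INR, minus_IZR by lia; ring).
  destruct (proj1 (Hbox i)) as [Hi1 Hi2], (proj1 (Hbox j)) as [Hj1 Hj2].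
  rewrite Ebox in Hi1, Hi2.
  apply Rabs_def1; apply (Rmult_lt_reg_l (INR K)); auto;
    rewrite ?Ropp_mult_distr_r_reverse, Rinv_r; lra.
Qed.

Lemma dirichlet2 (t1 t2 : R) (K : nat) : (1 <= K)%nat ->
  exists n : nat, (1 <= n)%nat /\ exists m1 m2 : Z,
    (Rabs (INR n * t1 - IZR m1) < / INR K)%R /\ (Rabs (INR n * t2 - IZR m2) < / INR K)%R.
Proof.
  intros HK.
  assert (KP : (0 < INR K)%R) by (apply lt_0_INR; lia).
  (* approximate t1 to precision 1/K^2 first, then n1 t2 to precision 1/K with a factor t <= K *)
  destruct (dirichlet t1 (K * K) ltac:(nia)) as (n1 & Hn1 & m1 & Hm1).
  destruct (dirichlet (INR n1 * t2) K HK) as (t & Ht & m2 & Hm2).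
  exists (t * n1)%nat. split; [nia |].
  exists (Z.of_nat t * m1)%Z, m2. rewrite mult_INR. split.
  - replace (INR t * INR n1 * t1 - IZR (Z.of_nat t * m1))%R
      with (INR t * (INR n1 * t1 - IZR m1))%R
      by (rewrite mult_IZR, <- INR_IZR_INZ; ring).
    rewrite mult_INR, Rinv_mult in Hm1.
    assert (tK : (1 <= INR t <= INR K)%R) by (split; [apply (le_INR 1) | apply le_INR]; lia).
    rewrite Rabs_mult, Rabs_pos_eq by lra.
    apply Rle_lt_trans with (INR K * Rabs (INR n1 * t1 - IZR m1))%R.
    + apply Rmult_le_compat_r; [apply Rabs_pos | lra].
    + replace (/ INR K)%R with (INR K * (/ INR K * / INR K))%R by (field; lra).
      apply Rmult_lt_compat_l; lra.
  - rewrite Rmult_assoc. exact Hm2.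
Qed.

Definition is_subgroup (S : C -> Prop) : Prop :=
  S 0 /\ (forall x y, S x -> S y -> S (x + y)) /\ (forall x, S x -> S (- x)).

Section Subgroup.

Variable G : C -> Prop.
Hypothesis HG : is_subgroup G.

Lemma subgroup_0 : G 0.
Proof. apply HG. Qed.

Lemma subgroup_add x y : G x -> G y -> G (x + y).
Proof. apply HG. Qed.

Lemma subgroup_opp x : G x -> G (- x).
Proof. apply HG. Qed.

Lemma subgroup_sub x y : G x -> G y -> G (x - y).
Proof. intros Hx Hy. apply subgroup_add; [| apply subgroup_opp]; assumption. Qed.

Lemma subgroup_nat_mul (n : nat) x : G x -> G (INR n * x).
Proof.
  intros Hx. induction n as [| n IH].
  - replace (INR 0 * x) with (RtoC 0) by (simpl; ring). apply subgroup_0.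
  - replace (INR (S n) * x) with (INR n * x + x) by (rewrite S_INR, RtoC_plus; ring).
    now apply subgroup_add.
Qed.

Lemma subgroup_Z_mul (m : Z) x : G x -> G (IZR m * x).
Proof.
  intros Hx. destruct (Z_le_gt_dec 0 m).
  - replace m with (Z.of_nat (Z.to_nat m)) by lia.
    rewrite <- INR_IZR_INZ. now apply subgroup_nat_mul.
  - replace (RtoC (IZR m) * x) with (- (INR (Z.to_nat (- m)) * x)).
    + now apply subgroup_opp, subgroup_nat_mul.
    + rewrite INR_IZR_INZ, Z2Nat.id, opp_IZR, RtoC_opp by lia. ring.
Qed.

End Subgroup.

Lemma Zspan2_subgroup a b : is_subgroup (Zspan2 a b).
Proof.
  split; [| split].
  - exists 0%Z, 0%Z. simpl. ring.
  - intros x y (m & n & ->) (m' & n' & ->). exists (m + m')%Z, (n + n')%Z.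
    rewrite !plus_IZR, !RtoC_plus. ring.
  - intros x (m & n & ->). exists (- m)%Z, (- n)%Z. rewrite !opp_IZR, !RtoC_opp. ring.
Qed.

Lemma Zspan2_l a b : Zspan2 a b a.
Proof. exists 1%Z, 0%Z. simpl. ring. Qed.

Lemma Zspan2_r a b : Zspan2 a b b.
Proof. exists 0%Z, 1%Z. simpl. ring. Qed.

Lemma Zspan2_least (K : C -> Prop) a b :
  is_subgroup K -> K a -> K b -> forall z, Zspan2 a b z -> K z.
Proof.
  intros HK Ha Hb z (m & n & ->).
  apply subgroup_add; try apply subgroup_Z_mul; assumption.
Qed.

Lemma sumsets_subgroup l : List.Forall is_subgroup l -> is_subgroup (sumsets l).
Proof.
  induction 1 as [| A l HA _ IH]; simpl.
  - split; [| split]; [reflexivity | intros x y -> ->; ring | intros x ->; ring].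
  - split; [| split].
    + exists 0, 0. repeat split; [apply subgroup_0; assumption .. | ring].
    + intros x y (s & t & Hs & Ht & ->) (s' & t' & Hs' & Ht' & ->).
      exists (s + s'), (t + t'). repeat split; [apply subgroup_add; assumption .. | ring].
    + intros x (s & t & Hs & Ht & ->).
      exists (- s), (- t). repeat split; [apply subgroup_opp; assumption .. | ring].
Qed.

Lemma sumsets_In l A z : List.Forall is_subgroup l -> In A l -> A z -> sumsets l z.
Proof.
  induction 1 as [| B l HB Hl IH]; simpl; [tauto |].
  intros [<- | HA] Hz.
  - exists z, 0. repeat split; [assumption | apply subgroup_0, sumsets_subgroup, Hl | ring].
  - exists 0, z. repeat split; [apply subgroup_0, HB | apply IH; assumption | ring].
Qed.

Lemma dense_set_mono (S S' : C -> Prop) :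
  (forall z, S z -> S' z) -> dense_set S -> dense_set S'.
Proof.
  intros Sub D z eps He. destruct (D z eps He) as (x & Hx & Hd). exists x. auto.
Qed.

Lemma discrete_small_zero (S : C -> Prop) : is_subgroup S -> discrete_set S ->
  exists eps : R, (0 < eps)%R /\ forall y, S y -> (Cmod y < eps)%R -> y = 0.
Proof.
  intros HS D. destruct (D 0 (subgroup_0 S HS)) as (eps & He & H0).
  exists eps. split; [exact He |]. intros y Hy Hd. apply H0; [exact Hy |].
  now replace (y - 0) with y by ring.
Qed.

Lemma nondiscrete_small (S : C -> Prop) : is_subgroup S -> ~ discrete_set S ->
  forall d : R, (0 < d)%R -> exists u, S u /\ u <> 0 /\ (Cmod u < d)%R.
Proof.
  intros HS ND d Hd. apply NNPP. intros NS. apply ND. intros x Hx.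
  exists d. split; [exact Hd |]. intros y Hy Hyx. apply Ceq_minus, NNPP. intros Hne.
  apply NS. exists (y - x). repeat split; [apply subgroup_sub | |]; assumption.
Qed.

Lemma discrete_of_gap (S K : C -> Prop) (eps : R) :
  is_subgroup K -> (0 < eps)%R -> (forall z, S z -> K z) ->
  (forall y, K y -> y <> 0 -> (eps <= Cmod y)%R) -> discrete_set S.
Proof.
  intros HK He Sub Gap x Hx. exists eps. split; [exact He |].
  intros y Hy Hyx. apply Ceq_minus, NNPP. intros Hne.
  pose proof (Gap (y - x) (subgroup_sub K HK y x (Sub y Hy) (Sub x Hx)) Hne). lra.
Qed.

Definition along (u0 z : C) : R := Re (z / u0).
Definition across (u0 z : C) : R := Im (z / u0).

Lemma along_scal (u0 : C) (r : R) (z : C) : along u0 (r * z) = (r * along u0 z)%R.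
Proof. unfold along. replace (r * z / u0) with (r * (z / u0)) by (unfold Cdiv; ring). apply re_scal_l. Qed.

Lemma across_scal (u0 : C) (r : R) (z : C) : across u0 (r * z) = (r * across u0 z)%R.
Proof. unfold across. replace (r * z / u0) with (r * (z / u0)) by (unfold Cdiv; ring). apply im_scal_l. Qed.

Lemma along_sub (u0 x y : C) : along u0 (x - y) = (along u0 x - along u0 y)%R.
Proof.
  unfold along. replace ((x - y) / u0) with (x / u0 + - (y / u0)) by (unfold Cdiv; ring).
  rewrite re_plus, re_opp. ring.
Qed.

Lemma across_add (u0 x y : C) : across u0 (x + y) = (across u0 x + across u0 y)%R.
Proof.
  unfold across. replace ((x + y) / u0) with (x / u0 + y / u0) by (unfold Cdiv; ring).
  apply im_plus.
Qed.

Lemma across_opp (u0 x : C) : across u0 (- x) = (- across u0 x)%R.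
Proof. unfold across. replace (- x / u0) with (- (x / u0)) by (unfold Cdiv; ring). apply im_opp. Qed.

Lemma across_sub (u0 x y : C) : across u0 (x - y) = (across u0 x - across u0 y)%R.
Proof. unfold Cminus. rewrite across_add, across_opp. ring. Qed.

Lemma across_self (u0 : C) : u0 <> 0 -> across u0 u0 = 0%R.
Proof. intros Hu0. unfold across. replace (u0 / u0) with (RtoC 1) by (field; exact Hu0). reflexivity. Qed.

Lemma Rabs_Im_le_Cmod (w : C) : (Rabs (Im w) <= Cmod w)%R.
Proof. pose proof (Rmax_Cmod w). pose proof (Rmax_r (Rabs (fst w)) (Rabs (snd w))). unfold Im. lra. Qed.

Lemma Rabs_across_le (u0 z : C) : u0 <> 0 -> (Rabs (across u0 z) <= Cmod z / Cmod u0)%R.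
Proof. intros Hu0. unfold across. rewrite <- Cmod_div by exact Hu0. apply Rabs_Im_le_Cmod. Qed.

Lemma coords_decomp (u0 z : C) : u0 <> 0 -> z = (along u0 z + Ci * across u0 z) * u0.
Proof.
  intros Hu0. replace ((along u0 z + Ci * across u0 z) * u0) with ((z / u0) * u0).
  - field. exact Hu0.
  - f_equal. apply injective_projections; unfold along, across, Re, Im; simpl; ring.
Qed.

Lemma Cmod_le_coords (u0 z : C) : u0 <> 0 ->
  (Cmod z <= Cmod u0 * (Rabs (along u0 z) + Rabs (across u0 z)))%R.
Proof.
  intros Hu0. rewrite (coords_decomp u0 z Hu0) at 1.
  rewrite Cmod_mult, Rmult_comm. apply Rmult_le_compat_l; [apply Cmod_ge_0 |].
  eapply Rle_trans; [apply Cmod_triangle |].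
  rewrite Cmod_mult, Cmod_Ci, !Cmod_R. lra.
Qed.

Lemma on_line (u0 z : C) : u0 <> 0 -> across u0 z = 0%R -> z = along u0 z * u0.
Proof.
  intros Hu0 Hz. rewrite (coords_decomp u0 z Hu0) at 1. rewrite Hz.
  f_equal. apply injective_projections; simpl; ring.
Qed.

Lemma across_on_line (u0 u w : C) : u0 <> 0 -> across u0 u = 0%R -> along u0 u <> 0%R ->
  across u w = (across u0 w / along u0 u)%R.
Proof.
  intros Hu0 Hu Hr. pose proof (on_line u0 u Hu0 Hu) as Eu.
  set (r := along u0 u) in *. rewrite Eu.
  unfold across. replace (w / (r * u0)) with (w / u0 * / r).
  - rewrite <- RtoC_inv, im_scal_r by exact Hr. reflexivity.
  - field. split; [exact Hu0 |]. intros E. apply Hr. apply (f_equal Re) in E. exact E.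
Qed.

Lemma across_Ci_mul (u0 : C) (r : R) : u0 <> 0 -> across u0 (Ci * r * u0) = r.
Proof.
  intros Hu0. unfold across. replace (Ci * r * u0 / u0) with (Ci * r) by (field; exact Hu0).
  simpl. ring.
Qed.

Lemma basis_decomp (u v z : C) : u <> 0 -> across u v <> 0%R ->
  exists s t : R, z = s * u + t * v.
Proof.
  intros Hu Hv. set (t := (across u z / across u v)%R).
  exists (along u z - t * along u v)%R, t.
  rewrite (coords_decomp u z Hu) at 1. rewrite (coords_decomp u v Hu) at 2.
  replace (RtoC (along u z - t * along u v) * u + t * ((along u v + Ci * across u v) * u))
    with ((RtoC (along u z - t * along u v) + t * (along u v + Ci * across u v)) * u) by ring.
  f_equal. apply injective_projections; unfold t; simpl; field; exact Hv.
Qed.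

Lemma R_lin_indep_across (a b : C) : R_lin_indep a b -> a <> 0 /\ across a b <> 0%R.
Proof.
  intros Hab.
  assert (Ha : a <> 0).
  { intros ->. destruct (Hab 1%R 0%R) as [H1 _]; [ring | lra]. }
  split; [exact Ha |]. intros Hb.
  destruct (Hab (along a b) (Ropp 1)) as [_ H1]; [| lra].
  rewrite (on_line a b Ha Hb) at 2. rewrite RtoC_opp. ring.
Qed.

Lemma lattice_off_line (a b u0 : C) : R_lin_indep a b -> u0 <> 0 ->
  exists g0, Zspan2 a b g0 /\ across u0 g0 <> 0%R.
Proof.
  intros Hab Hu0. apply NNPP. intros Hon.
  assert (On : forall z, Zspan2 a b z -> z = along u0 z * u0).
  { intros z Hz. apply on_line; [exact Hu0 |]. apply NNPP. intros Hz'. apply Hon. exists z. split; assumption. }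
  pose proof (On a (Zspan2_l a b)) as Ea. pose proof (On b (Zspan2_r a b)) as Eb.
  set (ra := along u0 a) in *. set (rb := along u0 b) in *.
  destruct (Hab rb (- ra)%R) as [_ Ha0].
  { rewrite Ea, Eb, RtoC_opp. ring. }
  apply (proj1 (R_lin_indep_across a b Hab)).
  rewrite Ea. replace ra with 0%R by lra. ring.
Qed.

Lemma dense_of_small_basis (S : C -> Prop) : is_subgroup S ->
  (forall d : R, (0 < d)%R -> exists u v, S u /\ S v /\ u <> 0 /\ across u v <> 0%R /\
     (Cmod u < d)%R /\ (Cmod v < d)%R) ->
  dense_set S.
Proof.
  intros HS Small z eps He.
  destruct (Small (eps / 2)%R ltac:(lra)) as (u & v & Su & Sv & Hu & Huv & Hcu & Hcv).
  destruct (basis_decomp u v z Hu Huv) as (s & t & Ez).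
  exists (IZR (Int_part s) * u + IZR (Int_part t) * v). split.
  - apply subgroup_add; try apply subgroup_Z_mul; assumption.
  - replace (IZR (Int_part s) * u + IZR (Int_part t) * v - z)
      with (- (frac_part s * u + frac_part t * v))
      by (rewrite Ez; unfold frac_part; rewrite !RtoC_minus; ring).
    rewrite Cmod_opp. eapply Rle_lt_trans; [apply Cmod_triangle |].
    rewrite !Cmod_mult, !Cmod_R.
    pose proof (base_fp s). pose proof (base_fp t).
    rewrite !Rabs_pos_eq by lra.
    pose proof (Cmod_ge_0 u). pose proof (Cmod_ge_0 v). nra.
Qed.

Lemma reduce_along_line (S : C -> Prop) (u0 u w : C) : is_subgroup S -> u0 <> 0 ->
  S u -> across u0 u = 0%R -> along u0 u <> 0%R -> S w ->
  exists w', S w' /\ across u0 w' = across u0 w /\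
    (Cmod w' <= Cmod u + Cmod u0 * Rabs (across u0 w))%R.
Proof.
  intros HS Hu0 Su Hu Hr Sw.
  set (q := (along u0 w / along u0 u)%R).
  exists (w - IZR (Int_part q) * u). split; [| split].
  - apply subgroup_sub, subgroup_Z_mul; assumption.
  - rewrite across_sub, across_scal, Hu. ring.
  - eapply Rle_trans; [apply Cmod_le_coords, Hu0 |].
    rewrite along_sub, along_scal, across_sub, across_scal, Hu, Rmult_0_r, Rminus_0_r.
    replace (along u0 w - IZR (Int_part q) * along u0 u)%R
      with (frac_part q * along u0 u)%R by (unfold frac_part, q; field; exact Hr).
    rewrite (on_line u0 u Hu0 Hu) at 2.
    rewrite Rabs_mult, Cmod_mult, Cmod_R.
    pose proof (base_fp q). rewrite (Rabs_pos_eq (frac_part q)) by lra.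
    pose proof (Rmult_le_pos _ _ (Cmod_ge_0 u0) (Rabs_pos (along u0 u))). nra.
Qed.

Definition across_discrete (u0 : C) (G : C -> Prop) : Prop :=
  exists eta : R, (0 < eta)%R /\
    forall h, G h -> (Rabs (across u0 h) < eta)%R -> across u0 h = 0%R.

Lemma dense_of_line (S : C -> Prop) (u0 : C) : is_subgroup S -> u0 <> 0 ->
  (forall d : R, (0 < d)%R -> exists u, S u /\ u <> 0 /\ across u0 u = 0%R /\ (Cmod u < d)%R) ->
  ~ across_discrete u0 S -> dense_set S.
Proof.
  intros HS Hu0 Line Steep. apply dense_of_small_basis; [exact HS |]. intros d Hd.
  pose proof (proj1 (Cmod_gt_0 u0) Hu0) as Cu0.
  destruct (Line (d / 2)%R ltac:(lra)) as (u & Su & Hu & Hlu & Hcu).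
  assert (Hr : along u0 u <> 0%R).
  { intros E. apply Hu. rewrite (on_line u0 u Hu0 Hlu), E. ring. }
  assert (Hw : exists w, S w /\ across u0 w <> 0%R /\
                 (Rabs (across u0 w) < d / (2 * Cmod u0))%R).
  { apply NNPP. intros Nw. apply Steep. exists (d / (2 * Cmod u0))%R.
    split; [apply Rdiv_lt_0_compat; lra |].
    intros h Sh Hh. apply NNPP. intros Hne. apply Nw. exists h. repeat split; assumption. }
  destruct Hw as (w & Sw & Hw & Hcw).
  destruct (reduce_along_line S u0 u w HS Hu0 Su Hlu Hr Sw) as (w' & Sw' & Ew' & Hcw').
  exists u, w'. repeat split; try assumption.
  - rewrite (across_on_line u0 u w' Hu0 Hlu Hr), Ew'.
    apply Rmult_integral_contrapositive_currified; [exact Hw | apply Rinv_neq_0_compat, Hr].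
  - lra.
  - apply (Rmult_lt_compat_l (Cmod u0)) in Hcw; [| exact Cu0].
    replace (Cmod u0 * (d / (2 * Cmod u0)))%R with (d / 2)%R in Hcw by (field; lra).
    lra.
Qed.

Lemma nondiscrete_dichotomy (H : C -> Prop) : is_subgroup H -> ~ discrete_set H ->
  dense_set H \/ exists u0 : C, u0 <> 0 /\
    forall d : R, (0 < d)%R -> exists u, H u /\ u <> 0 /\ across u0 u = 0%R /\ (Cmod u < d)%R.
Proof.
  intros HH ND. pose proof (nondiscrete_small H HH ND) as Small.
  destruct (classic (exists d0 u0, (0 < d0)%R /\ H u0 /\ u0 <> 0 /\
                       forall u, H u -> (Cmod u < d0)%R -> across u0 u = 0%R))
    as [(d0 & u0 & Hd0 & _ & Hu0 & Line) | NoLine].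
  - right. exists u0. split; [exact Hu0 |]. intros d Hd.
    destruct (Small (Rmin d d0) (Rmin_pos _ _ Hd Hd0)) as (u & Hu & Hnz & Hcu).
    pose proof (Rmin_l d d0). pose proof (Rmin_r d d0).
    exists u. repeat split; try assumption; [apply Line |]; (assumption || lra).
  - left. apply dense_of_small_basis; [exact HH |]. intros d Hd.
    destruct (Small d Hd) as (u0 & Hu0 & Hnz & Hcu0).
    assert (Hv : exists v, H v /\ across u0 v <> 0%R /\ (Cmod v < d)%R).
    { apply NNPP. intros Nv. apply NoLine. exists d, u0. repeat split; try assumption.
      intros v Hv Hcv. apply NNPP. intros Hne. apply Nv. exists v. repeat split; assumption. }
    destruct Hv as (v & Hv & Hav & Hcv). exists u0, v. repeat split; assumption.
Qed.

Lemma sumsets_incl (l l' : list (C -> Prop)) : List.Forall is_subgroup l' -> incl l l' ->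
  forall z, sumsets l z -> sumsets l' z.
Proof.
  intros Hl'. induction l as [| A l IH]; intros Hincl z Hz; simpl in Hz.
  - rewrite Hz. apply subgroup_0, sumsets_subgroup, Hl'.
  - destruct Hz as (s & t & Hs & Ht & ->). apply incl_cons_inv in Hincl as [HA Hl].
    apply subgroup_add; [apply sumsets_subgroup, Hl' | | apply IH; assumption].
    apply (sumsets_In l' A); assumption.
Qed.

Lemma Zspan2_family_subgroups (a b : nat -> C) (I : list nat) :
  List.Forall is_subgroup (map (fun i => Zspan2 (a i) (b i)) I).
Proof. apply Forall_map, Forall_forall. intros i _. apply Zspan2_subgroup. Qed.

Lemma RtoC_INR_neq_0 (N : nat) : (1 <= N)%nat -> RtoC (INR N) <> 0.
Proof.
  intros HN E. apply (f_equal Re) in E. simpl in E.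
  assert (0 < INR N)%R by (apply lt_0_INR; lia). lra.
Qed.

Definition scaled_subset (N : nat) (A S : C -> Prop) : Prop :=
  forall z, A z -> S (INR N * z).

Lemma scaled_preimage_subgroup (S : C -> Prop) (N : nat) :
  is_subgroup S -> is_subgroup (fun z => S (INR N * z)).
Proof.
  intros HS. split; [| split]; cbv beta.
  - replace (INR N * 0) with (RtoC 0) by ring. apply subgroup_0, HS.
  - intros x y Hx Hy. replace (INR N * (x + y)) with (INR N * x + INR N * y) by ring.
    apply subgroup_add; assumption.
  - intros x Hx. replace (INR N * - x) with (- (INR N * x)) by ring.
    apply subgroup_opp; assumption.
Qed.

Lemma INR_mul_assoc (M N : nat) (z : C) : INR (M * N) * z = INR M * (INR N * z).
Proof. rewrite mult_INR, RtoC_mult. ring. Qed.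

Lemma scaled_subset_mul (A S : C -> Prop) (M N : nat) :
  is_subgroup S -> scaled_subset N A S -> scaled_subset (M * N) A S.
Proof.
  intros HS HA z Hz. rewrite INR_mul_assoc. apply subgroup_nat_mul; [exact HS | exact (HA z Hz)].
Qed.

Lemma Zspan2_scaled (S : C -> Prop) (a b : C) : is_subgroup S ->
  (exists N, (1 <= N)%nat /\ S (INR N * a)) -> (exists N, (1 <= N)%nat /\ S (INR N * b)) ->
  exists N, (1 <= N)%nat /\ scaled_subset N (Zspan2 a b) S.
Proof.
  intros HS (Na & HNa & Ha) (Nb & HNb & Hb). exists (Nb * Na)%nat. split; [nia |].
  unfold scaled_subset.
  apply (Zspan2_least (fun z => S (INR (Nb * Na) * z))); [apply scaled_preimage_subgroup, HS | |].
  - rewrite INR_mul_assoc. apply subgroup_nat_mul; assumption.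
  - rewrite Nat.mul_comm, INR_mul_assoc. apply subgroup_nat_mul; assumption.
Qed.

Lemma sumsets_scaled (S : C -> Prop) (l : list (C -> Prop)) : is_subgroup S ->
  (forall A, In A l -> exists N, (1 <= N)%nat /\ scaled_subset N A S) ->
  exists N, (1 <= N)%nat /\ scaled_subset N (sumsets l) S.
Proof.
  intros HS. induction l as [| A l IH]; intros Hl.
  - exists 1%nat. split; [lia |]. intros z ->.
    replace (INR 1 * 0) with (RtoC 0) by ring. apply subgroup_0, HS.
  - destruct (Hl A (or_introl eq_refl)) as (NA & HNA & HA).
    destruct IH as (Nl & HNl & Hsl); [intros B HB; apply Hl; right; exact HB |].
    exists (Nl * NA)%nat. split; [nia |].
    intros z (s & t & Hs & Ht & ->). replace (INR (Nl * NA) * (s + t))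
      with (INR (Nl * NA) * s + INR (Nl * NA) * t) by ring.
    apply subgroup_add; [exact HS | apply (scaled_subset_mul A); assumption |].
    rewrite Nat.mul_comm. apply (scaled_subset_mul (sumsets l)); assumption.
Qed.

Lemma Zspan2_family_scaled (S : C -> Prop) (a b : nat -> C) (I : list nat) : is_subgroup S ->
  (forall i, In i I -> (exists N, (1 <= N)%nat /\ S (INR N * a i)) /\
                      (exists N, (1 <= N)%nat /\ S (INR N * b i))) ->
  exists N, (1 <= N)%nat /\ scaled_subset N (sumsets (map (fun i => Zspan2 (a i) (b i)) I)) S.
Proof.
  intros HS HI. apply sumsets_scaled; [exact HS |]. intros A HA.
  apply in_map_iff in HA as (i & <- & Hi).
  destruct (HI i Hi). apply Zspan2_scaled; assumption.
Qed.

Lemma dense_scaled (D S : C -> Prop) (N : nat) : (1 <= N)%nat ->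
  scaled_subset N D S -> dense_set D -> dense_set S.
Proof.
  intros HN Sub Dn z eps He. assert (NP : (0 < INR N)%R) by (apply lt_0_INR; lia).
  destruct (Dn (z / INR N) (eps / INR N)%R) as (x & Hx & Hd); [apply Rdiv_lt_0_compat; lra |].
  exists (INR N * x). split; [apply Sub, Hx |].
  replace (INR N * x - z) with (INR N * (x - z / INR N))
    by (field; apply RtoC_INR_neq_0, HN).
  rewrite Cmod_mult, Cmod_R, Rabs_pos_eq by lra.
  apply (Rmult_lt_compat_l (INR N)) in Hd; [| exact NP].
  replace (INR N * (eps / INR N))%R with eps in Hd by (field; lra). exact Hd.
Qed.


Lemma lattice_gap (a b : C) : R_lin_indep a b ->
  exists c0 : R, (0 < c0)%R /\ forall z, Zspan2 a b z -> z <> 0 -> (c0 <= Cmod z)%R.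
Proof.
  intros Hab. destruct (R_lin_indep_across a b Hab) as [Ha Hq].
  pose proof (proj1 (Cmod_gt_0 a) Ha) as Ca.
  pose proof (Rabs_pos_lt _ Hq) as Cq. set (q := Rabs (across a b)) in *.
  exists (Cmod a * Rmin 1 q)%R. split; [apply Rmult_lt_0_compat; [exact Ca | apply Rmin_pos; lra] |].
  intros z (m & n & Ez) Hz. pose proof (Rmin_l 1 q). pose proof (Rmin_r 1 q).
  destruct (Z.eq_dec n 0) as [-> | Hn].
  - assert (Hm : m <> 0%Z) by (intros ->; apply Hz; rewrite Ez; simpl; ring).
    assert (Hm1 : (1 <= Rabs (IZR m))%R) by (rewrite Rabs_Zabs; apply IZR_le; lia).
    rewrite Ez. replace (IZR m * a + IZR 0 * b) with (IZR m * a) by (simpl; ring).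
    rewrite Cmod_mult, Cmod_R. nra.
  - assert (Hn1 : (1 <= Rabs (IZR n))%R) by (rewrite Rabs_Zabs; apply IZR_le; lia).
    pose proof (Rabs_across_le a z Ha) as Hle.
    rewrite Ez, across_add, !across_scal, across_self, Rmult_0_r, Rplus_0_l, Rabs_mult in Hle
      by exact Ha.
    rewrite <- Ez in Hle. fold q in Hle.
    apply (Rmult_le_compat_l (Cmod a)) in Hle; [| lra].
    replace (Cmod a * (Cmod z / Cmod a))%R with (Cmod z) in Hle by (field; lra).
    eapply Rle_trans; [| exact Hle]. apply Rmult_le_compat_l; nra.
Qed.

Lemma discrete_multiple_in_lattice (G : C -> Prop) (a b z : C) :
  R_lin_indep a b -> is_subgroup G -> discrete_set G -> G a -> G b -> G z ->
  exists N, (1 <= N)%nat /\ Zspan2 a b (INR N * z).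
Proof.
  intros Hab HG DG Ga Gb Gz.
  destruct (discrete_small_zero G HG DG) as (eps & He & Zero).
  destruct (R_lin_indep_across a b Hab) as [Ha Hq].
  destruct (basis_decomp a b z Ha Hq) as (t1 & t2 & Ez).
  pose proof (proj1 (Cmod_gt_0 a) Ha) as Ca. pose proof (Cmod_ge_0 b) as Cb.
  destruct (archimed_cor1 (eps / (Cmod a + Cmod b))) as (K & HK & HKpos).
  { apply Rdiv_lt_0_compat; lra. }
  apply (Rmult_lt_compat_r (Cmod a + Cmod b)) in HK; [| lra].
  replace (eps / (Cmod a + Cmod b) * (Cmod a + Cmod b))%R with eps in HK by (field; lra).
  destruct (dirichlet2 t1 t2 K ltac:(lia)) as (n & Hn & m1 & m2 & H1 & H2).
  exists n. split; [exact Hn |]. exists m1, m2.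
  (* the approximation error lies in G and is shorter than eps, hence vanishes *)
  set (e := INR n * z - (IZR m1 * a + IZR m2 * b)).
  assert (Ge : G e).
  { apply subgroup_sub; [exact HG | apply subgroup_nat_mul; assumption |].
    apply subgroup_add; [| apply subgroup_Z_mul ..]; assumption. }
  assert (Ce : (Cmod e < eps)%R).
  { replace e with ((INR n * t1 - IZR m1)%R * a + (INR n * t2 - IZR m2)%R * b)
      by (unfold e; rewrite Ez, !RtoC_minus, !RtoC_mult; ring).
    eapply Rle_lt_trans; [apply Cmod_triangle |]. rewrite !Cmod_mult, !Cmod_R.
    pose proof (Rabs_pos (INR n * t2 - IZR m2)). nra. }
  apply Ceq_minus, (Zero e Ge Ce).
Qed.

Lemma scaled_lattice_discrete (D : C -> Prop) (a b : C) (N : nat) :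
  R_lin_indep a b -> (1 <= N)%nat -> scaled_subset N D (Zspan2 a b) -> discrete_set D.
Proof.
  intros Hab HN Sub. destruct (lattice_gap a b Hab) as (c0 & Hc0 & Gap).
  assert (NP : (0 < INR N)%R) by (apply lt_0_INR; lia).
  apply (discrete_of_gap D (fun z => Zspan2 a b (INR N * z)) (c0 / INR N)).
  - apply scaled_preimage_subgroup, Zspan2_subgroup.
  - apply Rdiv_lt_0_compat; assumption.
  - exact Sub.
  - intros y Hy Hne.
    assert (HNy : INR N * y <> 0) by (apply Cmult_neq_0; [apply RtoC_INR_neq_0, HN | exact Hne]).
    pose proof (Gap _ Hy HNy) as Hle. rewrite Cmod_mult, Cmod_R, Rabs_pos_eq in Hle by lra.
    apply (Rmult_le_reg_l (INR N)); [exact NP |].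
    replace (INR N * (c0 / INR N))%R with c0 by (field; lra). exact Hle.
Qed.

Lemma discrete_lattice_sum (a b : nat -> C) (a1 b1 : C) (I : list nat) : R_lin_indep a1 b1 ->
  (forall i, In i I -> exists G, is_subgroup G /\ discrete_set G /\
       G a1 /\ G b1 /\ G (a i) /\ G (b i)) ->
  discrete_set (sumsets (map (fun i => Zspan2 (a i) (b i)) I)).
Proof.
  intros H1 HI.
  destruct (Zspan2_family_scaled (Zspan2 a1 b1) a b I (Zspan2_subgroup a1 b1)) as (N & HN & Sub).
  { intros i Hi. destruct (HI i Hi) as (G & HG & DG & Ga1 & Gb1 & Ga & Gb).
    split; apply (discrete_multiple_in_lattice G); assumption. }
  exact (scaled_lattice_discrete _ a1 b1 N H1 HN Sub).
Qed.

Definition across_lattice (u0 : C) (c : R) : C -> Prop :=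
  fun z => exists m : Z, across u0 z = (IZR m * c)%R.

Lemma across_lattice_subgroup (u0 : C) (c : R) : is_subgroup (across_lattice u0 c).
Proof.
  split; [| split].
  - exists 0%Z. replace (RtoC 0) with (RtoC 0 * 0) by ring. rewrite across_scal. ring.
  - intros x y (m & Hx) (n & Hy). exists (m + n)%Z. rewrite across_add, Hx, Hy, plus_IZR. ring.
  - intros x (m & Hx). exists (- m)%Z. rewrite across_opp, Hx, opp_IZR. ring.
Qed.

Lemma across_lattice_not_dense (u0 : C) (c : R) : u0 <> 0 -> c <> 0%R ->
  ~ dense_set (across_lattice u0 c).
Proof.
  intros Hu0 Hc Dn. pose proof (proj1 (Cmod_gt_0 u0) Hu0) as Cu0.
  pose proof (Rabs_pos_lt c Hc) as Cc.
  (* no point of the set comes close to the line where across u0 equals c / 2 *)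
  set (z := Ci * (c / 2)%R * u0).
  destruct (Dn z (Cmod u0 * Rabs c / 4)%R) as (x & (m & Hm) & Hx); [nra |].
  pose proof (Rabs_across_le u0 (x - z) Hu0) as Hle.
  unfold z in Hle. rewrite across_sub, across_Ci_mul, Hm in Hle by exact Hu0. fold z in Hle.
  assert (Hhalf : (Rabs c * Rabs (IZR m - 1 / 2) < Rabs c * (1 / 4))%R).
  { rewrite <- Rabs_mult. replace (c * (IZR m - 1 / 2))%R with (IZR m * c - c / 2)%R by field.
    eapply Rle_lt_trans; [exact Hle |].
    apply (Rmult_lt_reg_l (Cmod u0)); [exact Cu0 |].
    replace (Cmod u0 * (Cmod (x - z) / Cmod u0))%R with (Cmod (x - z)) by (field; lra).
    lra. }
  apply Rmult_lt_reg_l in Hhalf; [| exact Cc]. apply Rabs_def2 in Hhalf.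
  destruct (Z_le_gt_dec m 0) as [Hm0 | Hm0].
  - apply IZR_le in Hm0. lra.
  - assert (1 <= IZR m)%R by (apply IZR_le; lia). lra.
Qed.

Lemma across_commensurable (G : C -> Prop) (u0 g0 z : C) :
  is_subgroup G -> across_discrete u0 G -> G g0 -> across u0 g0 <> 0%R -> G z ->
  exists N, (1 <= N)%nat /\ across_lattice u0 (across u0 g0) (INR N * z).
Proof.
  intros HG (eta & He & Gap) Gg0 Hc Gz. set (c := across u0 g0) in *.
  pose proof (Rabs_pos_lt c Hc) as Cc.
  destruct (archimed_cor1 (eta / Rabs c)) as (K & HK & HKpos); [apply Rdiv_lt_0_compat; assumption |].
  apply (Rmult_lt_compat_r (Rabs c)) in HK; [| exact Cc].
  replace (eta / Rabs c * Rabs c)%R with eta in HK by (field; lra).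
  destruct (dirichlet (across u0 z / c) K ltac:(lia)) as (n & Hn & m & Hm).
  exists n. split; [lia |]. exists m.
  (* n z - m g0 lies in G and is almost parallel to u0, hence exactly parallel *)
  set (h := INR n * z - IZR m * g0).
  assert (Gh : G h).
  { apply subgroup_sub; [exact HG | apply subgroup_nat_mul | apply subgroup_Z_mul]; assumption. }
  assert (Eh : across u0 h = (c * (INR n * (across u0 z / c) - IZR m))%R).
  { unfold h. rewrite across_sub, !across_scal. fold c. field. exact Hc. }
  assert (Sh : (Rabs (across u0 h) < eta)%R).
  { rewrite Eh, Rabs_mult. pose proof (Rabs_pos (INR n * (across u0 z / c) - IZR m)). nra. }
  pose proof (Gap h Gh Sh) as H0. rewrite Eh in H0.
  apply Rmult_integral in H0 as [H0 | H0]; [contradiction |].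
  rewrite across_scal.
  replace (INR n * across u0 z)%R with (INR n * (across u0 z / c) * c)%R by (field; exact Hc).
  f_equal. lra.
Qed.

Lemma across_discrete_lattice_sum_not_dense (a b : nat -> C) (u0 g0 : C) (I : list nat) :
  u0 <> 0 -> across u0 g0 <> 0%R ->
  (forall i, In i I -> exists G, is_subgroup G /\ across_discrete u0 G /\
       G g0 /\ G (a i) /\ G (b i)) ->
  ~ dense_set (sumsets (map (fun i => Zspan2 (a i) (b i)) I)).
Proof.
  intros Hu0 Hc HI Dn.
  destruct (Zspan2_family_scaled (across_lattice u0 (across u0 g0)) a b I
              (across_lattice_subgroup _ _)) as (N & HN & Sub).
  { intros i Hi. destruct (HI i Hi) as (G & HG & AG & Gg0 & Ga & Gb).
    split; apply (across_commensurable G); assumption. }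
  exact (across_lattice_not_dense u0 _ Hu0 Hc (dense_scaled _ _ N HN Sub Dn)).
Qed.

Lemma In_1_or_max2 (i : nat) (l : list nat) : (1 <= i)%nat ->
  In i (1%nat :: l ++ Nat.max 2 i :: nil).
Proof.
  intros Hi. destruct (Nat.eq_dec i 1) as [-> | Hi1]; [left; reflexivity |].
  right. apply in_or_app. right. left. lia.
Qed.

Section Lattices.

Variables (g : nat) (a b : nat -> C).
Hypothesis Hg : (2 <= g)%nat.
Hypothesis Hindep : forall i, (1 <= i <= g)%nat -> R_lin_indep (a i) (b i).

Let span (I : list nat) : C -> Prop := sumsets (map (fun i => Zspan2 (a i) (b i)) I).

Lemma span_subgroup (I : list nat) : is_subgroup (span I).
Proof. apply sumsets_subgroup, Zspan2_family_subgroups. Qed.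

Lemma span_In (I : list nat) (i : nat) (z : C) : In i I -> Zspan2 (a i) (b i) z -> span I z.
Proof.
  intros Hi Hz. apply (sumsets_In _ (Zspan2 (a i) (b i))); [apply Zspan2_family_subgroups | | exact Hz].
  apply (in_map (fun i => Zspan2 (a i) (b i))), Hi.
Qed.

Lemma lattice_sum_nondiscrete_pair :
  ~ discrete_set (span (seq 1 g)) ->
  exists j, (2 <= j <= g)%nat /\ ~ discrete_set (span (1%nat :: j :: nil)).
Proof.
  intros ND. apply NNPP. intros AllDiscrete. apply ND.
  apply (discrete_lattice_sum a b (a 1%nat) (b 1%nat)); [apply Hindep; lia |].
  intros i Hi. apply in_seq in Hi.
  (* Lambda_i lies in the pair Lambda_1 + Lambda_k, with k = max 2 i *)
  pose proof (In_1_or_max2 i nil ltac:(lia)) as Hk.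
  exists (span (1%nat :: Nat.max 2 i :: nil)).
  refine (conj (span_subgroup _) (conj _ (conj _ (conj _ (conj _ _))))).
  - apply NNPP. intros Hnd. apply AllDiscrete. exists (Nat.max 2 i). split; [lia | exact Hnd].
  - apply (span_In _ 1%nat); [left; reflexivity | apply Zspan2_l].
  - apply (span_In _ 1%nat); [left; reflexivity | apply Zspan2_r].
  - apply (span_In _ i); [exact Hk | apply Zspan2_l].
  - apply (span_In _ i); [exact Hk | apply Zspan2_r].
Qed.

Lemma lattice_sum_dense_triple (j : nat) : (2 <= j <= g)%nat ->
  dense_set (span (seq 1 g)) -> ~ discrete_set (span (1%nat :: j :: nil)) ->
  exists k, (2 <= k <= g)%nat /\ dense_set (span (1%nat :: j :: k :: nil)).
Proof.
  intros Hj Dn ND.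
  assert (Pair : forall k z, span (1%nat :: j :: nil) z -> span (1%nat :: j :: k :: nil) z).
  { intros k. apply sumsets_incl; [apply Zspan2_family_subgroups |].
    intros A HA. simpl in HA |- *. tauto. }
  destruct (nondiscrete_dichotomy _ (span_subgroup _) ND) as [Dpair | (u0 & Hu0 & Line)].
  { exists j. split; [exact Hj |]. exact (dense_set_mono _ _ (Pair j) Dpair). }
  destruct (lattice_off_line (a 1%nat) (b 1%nat) u0 (Hindep 1%nat ltac:(lia)) Hu0)
    as (g0 & Zg0 & Hg0).
  destruct (classic (exists k, (2 <= k <= g)%nat /\ ~ across_discrete u0 (span (1%nat :: j :: k :: nil))))
    as [(k & Hk & Steep) | Flat].
  - exists k. split; [exact Hk |].
    apply (dense_of_line _ u0); [apply span_subgroup | exact Hu0 | | exact Steep].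
    intros d Hd. destruct (Line d Hd) as (u & Hu & Hrest). exists u. split; [apply Pair, Hu | exact Hrest].
  - exfalso. apply (across_discrete_lattice_sum_not_dense a b u0 g0 (seq 1 g) Hu0 Hg0); [| exact Dn].
    intros i Hi. apply in_seq in Hi.
    pose proof (In_1_or_max2 i (j :: nil) ltac:(lia)) as Hk.
    exists (span (1%nat :: j :: Nat.max 2 i :: nil)).
    refine (conj (span_subgroup _) (conj _ (conj _ (conj _ _)))).
    + apply NNPP. intros Hnd. apply Flat. exists (Nat.max 2 i). split; [lia | exact Hnd].
    + apply (span_In _ 1%nat); [left; reflexivity | exact Zg0].
    + apply (span_In _ i); [exact Hk | apply Zspan2_l].
    + apply (span_In _ i); [exact Hk | apply Zspan2_r].
Qed.

End Lattices.

Theorem lemma2p2 (g : nat) (a b : nat -> C) :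
  (2 <= g)%nat ->
  (forall i, (1 <= i <= g)%nat -> R_lin_indep (a i) (b i)) ->
  ~ discrete_set (sumsets (map (fun i => Zspan2 (a i) (b i)) (seq 1 g))) ->
  (exists j, (2 <= j <= g)%nat /\
     ~ discrete_set (sumsets (Zspan2 (a 1%nat) (b 1%nat) :: Zspan2 (a j) (b j) :: nil)))
  /\
  (dense_set (sumsets (map (fun i => Zspan2 (a i) (b i)) (seq 1 g))) ->
   forall j, (2 <= j <= g)%nat ->
     ~ discrete_set (sumsets (Zspan2 (a 1%nat) (b 1%nat) :: Zspan2 (a j) (b j) :: nil)) ->
     exists k, (2 <= k <= g)%nat /\
       dense_set (sumsets (Zspan2 (a 1%nat) (b 1%nat) :: Zspan2 (a j) (b j)
                           :: Zspan2 (a k) (b k) :: nil))).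
Proof.
  intros Hg Hindep ND. split.
  - exact (lattice_sum_nondiscrete_pair g a b Hg Hindep ND).
  - intros Dn j Hj NDj. exact (lattice_sum_dense_triple g a b Hg Hindep j Hj Dn NDj).
Qed.
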